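(* Let $M\ge1$ and $m_0\ge1$ be integers. For each $i\in\{1,\dots,M\}$ let $A_i\in\mathbb{R}^{n_i\times n_i}$, $B_i,F_i\in\mathbb{R}^{n_i\times m_0}$, $C_i\in\mathbb{R}^{m_0\times n_i}$, let $\mathcal{N}_i^-\subseteq\{1,\dots,M\}\setminus\{i\}$ and $l_{ij}\in\mathbb{R}$ for $j\in\mathcal{N}_i^-$, and consider the interconnected discrete-time system $$x_i^+=A_ix_i+B_iu_i+F_iv_i,\quad y_i=C_ix_i,\quad v_i=\sum_{j\in\mathcal{N}_i^-}l_{ij}(y_j-y_i),\qquad i=1,\dots,M.$$ Let $n=\sum_in_i$, $m=Mm_0$, $C=\operatorname{diag}(C_1,\dots,C_M)$, and let $\tilde L\in\mathbb{R}^{m\times m}$ be the block matrix with $m_0\times m_0$ blocks $\tilde L_{ii}=\big(\sum_{j\in\mathcal{N}_i^-}l_{ij}\big)I_{m_0}$, $\tilde L_{ij}=-l_{ij}I_{m_0}$ for $j\in\mathcal{N}_i^-$, and $\tilde L_{ij}=0$ otherwise; assume $w^\top\tilde Lw\ge0$ for all $w\in\mathbb{R}^m$. Let $U=\tilde LC\in\mathbb{R}^{m\times n}$ and $W=C^\top\tilde L^\top\in\mathbb{R}^{n\times m}$, and partition them into block rows $U=[U_1^\top,\dots,U_M^\top]^\top$ with $U_i\in\mathbb{R}^{m_0\times n}$ and $W=[W_1^\top,\dots,W_M^\top]^\top$ with $W_i\in\mathbb{R}^{n_i\times m}$. Fix $\epsilon_0>0$ and $\epsilon_i>0$ for $i=1,\dots,M$.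 Suppose that for every $i\in\{1,\dots,M\}$ there exist $S_i\in\mathbb{R}^{m_0\times m_0}$, $G_i\in\mathbb{R}^{m_0\times n_i}$, symmetric $E_i\in\mathbb{R}^{n_i\times n_i}$ and $H_i\in\mathbb{R}^{n_i\times n_i}$ satisfying: (i) $E_i\succeq\epsilon_iI_{n_i}$; (ii) $H_i$ and $S_i$ are diagonal with strictly positive diagonal entries; (iii) $$\begin{bmatrix} E_i & \tfrac12 E_iC_i^\top & (A_iE_i+B_iG_i)^\top & E_i\\ \tfrac12 C_iE_i & \tfrac12 S_i+\tfrac12 S_i^\top & F_i^\top & 0\\ A_iE_i+B_iG_i & F_i & E_i & 0\\ E_i & 0 & 0 & H_i \end{bmatrix}\succeq 0;$$ (iv) $[H_i]_j\le\dfrac{1}{|W_i|_j+\epsilon_0}$ for all $j\in\{1,\dots,n_i\}$; (v) $[S_i]_k\le\dfrac{1}{|U_i|_k}$ for all $k\in\{1,\dots,m_0\}$ with $|U_i|_k>0$. Then the decentralized control laws $u_i=K_ix_i$ with $K_i=G_iE_i^{-1}$, $i=1,\dots,M$, render the origin of the global closed-loop system asymptotically stable.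
   Context: For a matrix $T$, $[T]_j$ denotes its $j$-th diagonal entry and $|T|_j$ the $1$-norm (sum of absolute values of entries) of its $j$-th row. $I_k$ is the $k\times k$ identity matrix and $M\succeq0$ means the symmetric matrix $M$ is positive semidefinite. The global closed-loop system is $x_i^+=(A_i+B_iK_i)x_i+F_iv_i$, $i=1,\dots,M$, with $v_i$ given by the coupling formula. *)

From HB Require Import structures.
From mathcomp Require Import all_boot all_order all_algebra.
From mathcomp Require Import reals.
Set Implicit Arguments. Unset Strict Implicit. Unset Printing Implicit Defensive.
Import Order.TTheory GRing.Theory Num.Theory.
Local Open Scope ring_scope.

Section Defs.
Variable R : realType.

Definition psd k (P : 'M[R]_k) : Prop :=
  P^T = P /\ forall v : 'cV[R]_k, 0 <= (v^T *m P *m v) 0 0.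

Definition posdiag k (P : 'M[R]_k) : Prop :=
  (forall a b : 'I_k, a != b -> P a b = 0) /\ (forall a : 'I_k, 0 < P a a).

Definition rownorm1 p q (T : 'M[R]_(p, q)) (j : 'I_p) : R := \sum_(k < q) `|T j k|.

Variables (M m0 : nat) (n : 'I_M -> nat).

Definition Lcoef (Nm : 'I_M -> {set 'I_M}) (l : 'I_M -> 'I_M -> R) (i j : 'I_M) : R :=
  if i == j then \sum_(k in Nm i) l i k
  else if j \in Nm i then - l i j else 0.

Definition Ltilde Nm l : 'M[R]_(\sum_(i < M) m0) :=
  mxblock (fun i j : 'I_M => (Lcoef Nm l i j)%:M : 'M[R]_(m0, m0)).

Definition Cglob (C : forall i, 'M[R]_(m0, n i)) : 'M[R]_(\sum_(i < M) m0, \sum_(i < M) n i) :=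
  mxblock (fun i j : 'I_M => if i == j then C j else 0 : 'M[R]_(m0, n j)).

Definition Uglob Nm l C := Ltilde Nm l *m Cglob C.
Definition Wglob Nm l C := (Cglob C)^T *m (Ltilde Nm l)^T.

Definition Ublk Nm l C (i : 'I_M) : 'M[R]_(m0, \sum_(i < M) n i) :=
  @submxcol R M (fun _ => m0) _ (Uglob Nm l C) i.
Definition Wblk Nm l C (i : 'I_M) : 'M[R]_(n i, \sum_(i < M) m0) :=
  @submxcol R M n _ (Wglob Nm l C) i.

Definition LMI k (A E : 'M[R]_k) (B F : 'M[R]_(k, m0)) (C : 'M[R]_(m0, k))
    (S : 'M[R]_m0) (G : 'M[R]_(m0, k)) (H : 'M[R]_k) : 'M[R]_((k + m0) + (k + k)) :=
  let AEBG := A *m E + B *m G in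
  block_mx
    (block_mx E (2^-1 *: (E *m C^T)) (2^-1 *: (C *m E)) (2^-1 *: S + 2^-1 *: S^T))
    (block_mx AEBG^T E F^T 0)
    (block_mx AEBG F E 0)
    (block_mx E 0 0 H).

Definition gstate := forall i : 'I_M, 'cV[R]_(n i).

Definition gnorm (x : gstate) : R := \sum_(i < M) \sum_(a < n i) `|x i a 0|.

Definition cl_step (A : forall i, 'M[R]_(n i)) (B F : forall i, 'M[R]_(n i, m0))
    (C : forall i, 'M[R]_(m0, n i)) (K : forall i, 'M[R]_(m0, n i))
    (Nm : 'I_M -> {set 'I_M}) (l : 'I_M -> 'I_M -> R) (x : gstate) : gstate :=
  fun i => (A i + B i *m K i) *m x i
           + F i *m (\sum_(j in Nm i) l i j *: (C j *m x j - C i *m x i)).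

Definition asympt_stable (f : gstate -> gstate) : Prop :=
  (forall eps : R, 0 < eps -> exists2 delta : R, 0 < delta &
     forall x0 : gstate, gnorm x0 < delta -> forall k : nat, gnorm (iter k f x0) < eps)
  /\ (exists2 delta : R, 0 < delta &
     forall x0 : gstate, gnorm x0 < delta ->
       forall eps : R, 0 < eps -> exists N : nat, forall k : nat, (N <= k)%N ->
         gnorm (iter k f x0) < eps).

End Defs.

From Pilot Require Import Defs.
From HB Require Import structures.
From mathcomp Require Import all_boot all_order all_algebra.
From mathcomp Require Import reals.
From mathcomp Require Import ring lra.
Import Order.TTheory GRing.Theory Num.Theory.
Set Implicit Arguments. Unset Strict Implicit. Unset Printing Implicit Defensive.
Local Open Scope ring_scope.

(* With P_i = E_i^-1, V(x) = sum_i x_i^T P_i x_i is a quadratic Lyapunov function.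
   Condition (iii) is a Schur-complement form; tested at a suitable vector it gives
   for each subsystem
     x_i+^T P_i x_i+ + sum_j x_ij^2 / [H_i]_j <= x_i^T P_i x_i + v_i^T C_i x_i + v_i^T S_i v_i.
   Summing over i, the cross terms add up to -y^T Ltilde y <= 0 (y = C x), the terms
   v_i^T S_i v_i are bounded through (v) and Cauchy-Schwarz by sum_j |W_i|_j x_ij^2,
   and (iv) makes sum_j x_ij^2 / [H_i]_j dominate these plus eps0 |x_i|^2.  Hence
   V(x+) <= V(x) - a |x|^2 with 0 <= V(x) <= b |x|^2, which gives stability, and the
   contraction V(x+) <= (1 - a/b) V(x) gives convergence to the origin. *)

Lemma big_Rank (T : Type) (idx : T) (op : Monoid.com_law idx) p (p_ : 'I_p -> nat)
    (F : 'I_(\sum_i p_ i) -> T) :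
  \big[op/idx]_r F r = \big[op/idx]_i \big[op/idx]_(k < p_ i) F (tagnat.Rank i k).
Proof.
rewrite sig_big_dep /= (reindex tagnat.rank) /=; last exact/onW_bij/tagnat.rank_bij.
by apply: eq_bigr => -[i k] _; rewrite tagnat.rankE.
Qed.

Lemma mxcol_Rank (T : Type) p (p_ : 'I_p -> nat) n (B_ : forall i, 'M[T]_(p_ i, n)) i k j :
  mxcol B_ (tagnat.Rank i k) j = B_ i k j.
Proof. by have /matrixP/(_ k j) := mxcolK B_ i; rewrite mxE. Qed.

Section Vdot.
Variable R : comPzRingType.
Implicit Types (k : nat).

Definition vdot k (u w : 'cV[R]_k) : R := (u^T *m w) 0 0.

Lemma vdotE k (u w : 'cV[R]_k) : vdot u w = \sum_a u a 0 * w a 0.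
Proof. by rewrite /vdot mxE; apply: eq_bigr => a _; rewrite mxE. Qed.

Lemma vdotC k (u w : 'cV[R]_k) : vdot u w = vdot w u.
Proof. by rewrite !vdotE; apply: eq_bigr => a _; rewrite mulrC. Qed.

Lemma vdotDr k (u w1 w2 : 'cV[R]_k) : vdot u (w1 + w2) = vdot u w1 + vdot u w2.
Proof. by rewrite /vdot mulmxDr mxE. Qed.

Lemma vdotNr k (u w : 'cV[R]_k) : vdot u (- w) = - vdot u w.
Proof. by rewrite /vdot mulmxN mxE. Qed.

Lemma vdotZr k (u w : 'cV[R]_k) (r : R) : vdot u (r *: w) = r * vdot u w.
Proof. by rewrite /vdot -scalemxAr mxE. Qed.

Lemma vdot0r k (u : 'cV[R]_k) : vdot u 0 = 0.
Proof. by rewrite /vdot mulmx0 mxE. Qed.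

Lemma vdot_mull k l (N : 'M[R]_(k, l)) (u : 'cV[R]_l) (w : 'cV[R]_k) :
  vdot (N *m u) w = vdot u (N^T *m w).
Proof. by rewrite /vdot trmx_mul mulmxA. Qed.

Lemma vdot_col_mx k l (u1 w1 : 'cV[R]_k) (u2 w2 : 'cV[R]_l) :
  vdot (col_mx u1 u2) (col_mx w1 w2) = vdot u1 w1 + vdot u2 w2.
Proof. by rewrite /vdot tr_col_mx mul_row_col mxE. Qed.

Lemma vdot_mxcol p (p_ : 'I_p -> nat) (u w : forall i, 'cV[R]_(p_ i)) :
  vdot (mxcol u) (mxcol w) = \sum_i vdot (u i) (w i).
Proof. by rewrite /vdot tr_mxcol mul_mxrow_mxcol summxE. Qed.

Lemma vdot_diag k (S : 'M[R]_k) (u w : 'cV[R]_k) :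
  (forall a b, a != b -> S a b = 0) -> vdot u (S *m w) = \sum_a S a a * u a 0 * w a 0.
Proof.
move=> S_diag; rewrite vdotE; apply: eq_bigr => a _; rewrite mxE (bigD1 a) //=.
rewrite big1 ?addr0 => [|b /negbTE ba]; first by rewrite mulrCA mulrA.
by rewrite S_diag ?mul0r // eq_sym ba.
Qed.

End Vdot.

Lemma vdot_ge0 (R : realDomainType) k (y : 'cV[R]_k) : 0 <= vdot y y.
Proof. by rewrite vdotE sumr_ge0 // => a _; rewrite -expr2 sqr_ge0. Qed.

Lemma vdot_eq0 (R : realDomainType) k (y : 'cV[R]_k) : vdot y y = 0 -> y = 0.
Proof.
have sq_ge0 b : 0 <= y b 0 * y b 0 by rewrite -expr2 sqr_ge0.
rewrite vdotE => /psumr_eq0P y0; apply/matrixP => a j; rewrite ord1 mxE.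
have /eqP := y0 (fun b _ => sq_ge0 b) a isT.
by rewrite mulf_eq0 orbb => /eqP.
Qed.

Lemma weighted_sqr_sum_le (R : realDomainType) (T : finType) (u y : T -> R) (s : R) :
  0 <= s -> s * \sum_t `|u t| <= 1 ->
  s * (\sum_t u t * y t) ^+ 2 <= \sum_t `|u t| * y t ^+ 2.
Proof.
move=> s_ge0 s_le1; set z := \sum_t u t * y t; set tau := s * z.
(* summing 2 tau u y <= |u| (y^2 + tau^2) over t with tau = s z gives
   2 s z^2 <= sum |u| y^2 + s z^2 (s sum |u|) *)
have pointwise t : 2 * tau * (u t * y t) <= `|u t| * y t ^+ 2 + tau ^+ 2 * `|u t|.
  have uy_le : tau * (u t * y t) <= `|tau| * (`|u t| * `|y t|).
    by rewrite -!normrM; apply: ler_norm.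
  have := sqr_ge0 (`|y t| - `|tau|); rewrite -[y t ^+ 2]real_normK ?num_real //.
  rewrite -[tau ^+ 2]real_normK ?num_real //.
  have := normr_ge0 (u t); nra.
have summed : 2 * tau * z <= \sum_t `|u t| * y t ^+ 2 + tau ^+ 2 * \sum_t `|u t|.
  rewrite /z mulr_sumr [_ * \sum_t `|u t|]mulr_sumr -big_split /=.
  by apply: ler_sum => t _; apply: pointwise.
have : tau ^+ 2 * \sum_t `|u t| <= s * z ^+ 2.
  have : 0 <= s * z ^+ 2 by rewrite mulr_ge0 ?sqr_ge0.
  rewrite /tau; nra.
rewrite /tau in summed *; nra.
Qed.

Lemma sqr_sum_norm_le (R : realFieldType) (T : finType) (y : T -> R) :
  (\sum_t `|y t|) ^+ 2 <= #|T|%:R * \sum_t y t ^+ 2.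
Proof.
have [T0|T_gt0] := posnP #|T|.
  by rewrite T0 mul0r big1 ?expr0n // => t; have := card0_eq T0 t; rewrite !inE.
have := @weighted_sqr_sum_le _ _ (fun=> 1) (fun t => `|y t|) #|T|%:R^-1.
rewrite invr_ge0 ler0n normr1 sumr_const mulVf ?pnatr_eq0 -?lt0n // lexx.
move=> /(_ isT isT); rewrite ler_pdivrMl ?ltr0n //.
have e1 : \sum_t 1 * `|y t| = \sum_t `|y t| by apply: eq_bigr => t _; rewrite mul1r.
have e2 : \sum_t 1 * `|y t| ^+ 2 = \sum_t y t ^+ 2.
  by apply: eq_bigr => t _; rewrite mul1r real_normK ?num_real.
by rewrite e1 e2.
Qed.

Lemma ler_term_sum (R : numDomainType) (T : finType) (F : T -> R) t :
  (forall s, 0 <= F s) -> F t <= \sum_s F s.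
Proof. by move=> F_ge0; rewrite (bigD1 t) //= lerDl sumr_ge0. Qed.

Lemma vdot_le_norm1 (R : realDomainType) k (P : 'M[R]_k) (x : 'cV[R]_k) :
  vdot x (P *m x) <= (\sum_a \sum_b `|P a b|) * (\sum_a `|x a 0|) ^+ 2.
Proof.
set g := \sum_a `|x a 0|.
have x_le a : `|x a 0| <= g by apply: ler_term_sum.
rewrite vdotE mulr_suml; apply: ler_sum => a _.
rewrite [(P *m x) a 0]mxE mulr_sumr mulr_suml.
apply: ler_sum => b _; apply: le_trans (ler_norm _) _.
rewrite !normrM mulrCA expr2; apply: ler_wpM2l => //.
by apply: ler_pM => //; apply: x_le.
Qed.

Lemma sum_sqr_div_ge (R : realFieldType) k (h w : 'I_k -> R) e0 (x : 'cV[R]_k) :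
  (forall a, 0 < h a) -> (forall a, 0 <= w a) -> 0 < e0 ->
  (forall a, h a <= 1 / (w a + e0)) ->
  \sum_a w a * x a 0 ^+ 2 + e0 * vdot x x <= \sum_a x a 0 ^+ 2 / h a.
Proof.
move=> h_gt0 w_ge0 e0_gt0 h_le; rewrite vdotE mulr_sumr -big_split /=.
apply: ler_sum => a _; rewrite -expr2 -mulrDl mulrC ler_wpM2l ?sqr_ge0 //.
have we_gt0 : 0 < w a + e0 by rewrite ltr_wpDl.
by rewrite -[w a + e0]invrK lef_pV2 ?posrE ?invr_gt0 // -div1r.
Qed.

Section QuadraticLyapunov.
Variables (R : archiFieldType) (T : Type) (f : T -> T) (V g : T -> R) (a b : R).
Hypotheses (a_gt0 : 0 < a) (a_le_b : a <= b) (g_ge0 : forall x, 0 <= g x).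
Hypotheses (V_ge0 : forall x, 0 <= V x) (V_le : forall x, V x <= b * g x ^+ 2).
Hypothesis V_decr : forall x, V (f x) <= V x - a * g x ^+ 2.

Let b_gt0 : 0 < b. Proof. exact: lt_le_trans a_le_b. Qed.

Lemma lyapunov_lower x : a * g x ^+ 2 <= V x.
Proof. by have := V_decr x; have := V_ge0 (f x); lra. Qed.

Lemma lyapunov_iter_le x k : V (iter k f x) <= V x.
Proof.
elim: k => //= k IH; apply: le_trans IH.
have := mulr_ge0 (ltW a_gt0) (sqr_ge0 (g (iter k f x))).
by have := V_decr (iter k f x); lra.
Qed.

Lemma lyapunov_contract x : V (f x) <= (1 - a / b) * V x.
Proof.
have bV : a / b * V x <= a * g x ^+ 2.
  have := ler_wpM2l (divr_ge0 (ltW a_gt0) (ltW b_gt0)) (V_le x).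
  by rewrite mulrA divfK ?gt_eqF.
by have := V_decr x; lra.
Qed.

Lemma lyapunov_iter_decay x k : (1 + k%:R * (a / b)) * V (iter k f x) <= V x.
Proof.
have s_gt0 : 0 < a / b by rewrite divr_gt0.
have s_le1 : a / b <= 1 by rewrite ler_pdivrMr // mul1r.
elim: k => [|k IH]; first by rewrite mul0r addr0 mul1r.
apply: le_trans IH; rewrite iterS -natr1.
set y := iter k f x.
have k1_ge0 : 0 <= k%:R + 1 :> R by rewrite addr_ge0.
have := ler_wpM2l (addr_ge0 ler01 (mulr_ge0 k1_ge0 (ltW s_gt0))) (lyapunov_contract y).
have := mulr_ge0 (mulr_ge0 k1_ge0 (sqr_ge0 (a / b))) (V_ge0 y).
lra.
Qed.

Lemma lyapunov_stable eps : 0 < eps ->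
  exists2 delta, 0 < delta & forall x, g x < delta -> forall k, g (iter k f x) < eps.
Proof.
move=> eps_gt0; set d := a * eps / b.
have d_gt0 : 0 < d by rewrite divr_gt0 ?mulr_gt0.
have d_le : d <= eps by rewrite ler_pdivrMr // mulrC ler_pM2l.
have bd : b * d = a * eps by rewrite mulrC mulfVK ?gt_eqF.
exists d => // x gx k; set y := iter k f x.
have gx2 : b * g x ^+ 2 < a * eps ^+ 2.
  have : g x ^+ 2 < d ^+ 2 by rewrite ltrXn2r.
  rewrite -(ltr_pM2l b_gt0) => /lt_le_trans; apply.
  rewrite expr2 mulrA bd -mulrA ler_pM2l ?mulr_gt0 //.
  by rewrite ler_pM2l.
rewrite -ltr_sqr ?nnegrE ?g_ge0 ?ltW // -(ltr_pM2l a_gt0).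
have := lyapunov_lower y; have := lyapunov_iter_le x k; have := V_le x; lra.
Qed.

Lemma lyapunov_attractive x eps : 0 < eps ->
  exists N, forall k, (N <= k)%N -> g (iter k f x) < eps.
Proof.
move=> eps_gt0; set s := a / b; have s_gt0 : 0 < s by rewrite divr_gt0.
have c_gt0 := mulr_gt0 (mulr_gt0 a_gt0 s_gt0) (exprn_gt0 2 eps_gt0).
have z_ge0 : 0 <= V x / (a * s * eps ^+ 2) by rewrite divr_ge0 ?V_ge0 ?ltW.
exists (Num.bound (V x / (a * s * eps ^+ 2))) => k Nk; set y := iter k f x.
have k_gt : V x < k%:R * (a * s * eps ^+ 2).
  rewrite -ltr_pdivrMr //; apply: lt_le_trans (archi_boundP z_ge0) _.
  by rewrite ler_nat.
have k_gt0 : 0 < k%:R :> R by have := V_ge0 x; rewrite -(pmulr_lgt0 _ c_gt0); lra.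
have ks_gt0 := mulr_gt0 k_gt0 (mulr_gt0 a_gt0 s_gt0).
rewrite -ltr_sqr ?nnegrE ?g_ge0 ?ltW // -(ltr_pM2l ks_gt0).
have ag_ge0 := mulr_ge0 (ltW a_gt0) (sqr_ge0 (g y)).
have ks_ge0 := addr_ge0 ler01 (mulr_ge0 (ltW k_gt0) (ltW s_gt0)).
have := ler_wpM2l ks_ge0 (lyapunov_lower y); have := lyapunov_iter_decay x k.
rewrite -/y -/s; nra.
Qed.

End QuadraticLyapunov.

Section Psd.
Variable R : realType.
Implicit Types (k : nat).

Lemma psd_vdot_ge0 k (P : 'M[R]_k) v : psd P -> 0 <= vdot v (P *m v).
Proof. by case=> _ /(_ v); rewrite /vdot mulmxA. Qed.

Lemma psd_shift_vdot k (E : 'M[R]_k) e y :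
  psd (E - e *: 1%:M) -> e * vdot y y <= vdot y (E *m y).
Proof.
move=> /(psd_vdot_ge0 y).
by rewrite mulmxBl vdotDr vdotNr -scalemxAl mul1mx vdotZr subr_ge0.
Qed.

Lemma psd_shift_unitmx k (E : 'M[R]_k) e :
  0 < e -> psd (E - e *: 1%:M) -> E \in unitmx.
Proof.
move=> e_gt0 psdE; rewrite -unitmx_tr -row_free_unit -kermx_eq0.
apply/eqP/row_matrixP => i; rewrite row0.
set r := row i _; have Er : E *m r^T = 0.
  by rewrite -[E]trmxK -trmx_mul /r -row_mul mulmx_ker row0 trmx0.
have := psd_shift_vdot r^T psdE; rewrite Er vdot0r pmulr_rle0 // => r_le0.
have /vdot_eq0/(congr1 trmx) : vdot r^T r^T = 0.
  by apply/eqP; rewrite eq_le r_le0 vdot_ge0.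
by rewrite trmxK trmx0.
Qed.

Lemma psd_block_schur p q (Q : 'M[R]_p) (N : 'M[R]_(q, p)) (D : 'M[R]_q) z1 z2 :
  psd (block_mx Q N^T N D) -> D *m z2 = N *m z1 ->
  vdot z2 (D *m z2) <= vdot z1 (Q *m z1).
Proof.
move=> /(psd_vdot_ge0 (col_mx z1 (- z2))) + Dz2.
rewrite mul_block_col vdot_col_mx !vdotDr -vdot_mull -Dz2 mulmxN !vdotNr.
by rewrite [vdot (D *m z2) _]vdotC; lra.
Qed.

End Psd.

Lemma vdot_diag_le (R : realType) k q (S : 'M[R]_k) (U : 'M[R]_(k, q)) (y : 'cV[R]_q) :
  (forall a b, a != b -> S a b = 0) -> (forall a, 0 <= S a a) ->
  (forall a, S a a * rownorm1 U a <= 1) ->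
  vdot (U *m y) (S *m (U *m y)) <= \sum_a \sum_c `|U a c| * y c 0 ^+ 2.
Proof.
move=> S_diag S_ge0 S_le; rewrite vdot_diag //; apply: ler_sum => a _.
rewrite -mulrA -expr2 mxE; exact: weighted_sqr_sum_le.
Qed.

Lemma LMI_local_decrease (R : realType) k m0 (A E : 'M[R]_k) (B F : 'M[R]_(k, m0))
    (C : 'M[R]_(m0, k)) (S : 'M[R]_m0) (G : 'M[R]_(m0, k)) (H : 'M[R]_k) (P : 'M[R]_k) x v xp :
  E^T = E -> E *m P = 1%:M -> posdiag H -> psd (LMI A E B F C S G H) ->
  xp = (A + B *m (G *m P)) *m x + F *m v ->
  vdot xp (P *m xp) + \sum_a x a 0 ^+ 2 / H a a
    <= vdot x (P *m x) + vdot v (C *m x) + vdot v (S *m v).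
Proof.
move=> ET EP [H_diag H_gt0] psdLMI xpE.
have PT : P^T = P.
  by rewrite -[P^T]mulmx1 -EP mulmxA -ET -trmx_mul EP trmx1 mul1mx.
pose w := \col_a (x a 0 / H a a).
have Hw : H *m w = x.
  apply/matrixP => a j; rewrite ord1 mxE (bigD1 a) //= big1 => [|b ba].
    by rewrite !mxE addr0 mulrC divfK ?gt_eqF.
  by rewrite H_diag ?mul0r // eq_sym.
(* (iii) reads [Q N^T; N D] >= 0; at z1 = (P x, v) and z2 = (P xp, H^-1 x) we have
   D z2 = N z1 = (xp, x), and the Schur bound z2^T D z2 <= z1^T Q z1 is the claim *)
pose Q := block_mx E (2^-1 *: (E *m C^T)) (2^-1 *: (C *m E)) (2^-1 *: S + 2^-1 *: S^T).
pose N := block_mx (A *m E + B *m G) F E 0.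
pose D := block_mx E 0 0 H.
have LMIE : LMI A E B F C S G H = block_mx Q N^T N D.
  by rewrite /LMI tr_block_mx ET trmx0.
have := psd_block_schur (Q := Q) (N := N) (D := D)
  (z1 := col_mx (P *m x) v) (z2 := col_mx (P *m xp) w).
rewrite -LMIE => /(_ psdLMI).
have EPy l (y : 'M[R]_(k, l)) : E *m (P *m y) = y by rewrite mulmxA EP mul1mx.
rewrite !mul_block_col !mul0mx !addr0 add0r Hw EPy mulmxA mulmxDl -!mulmxA EPy.
rewrite EP mulmx1 -xpE => /(_ erefl).
have PxP y : vdot (P *m y) y = vdot y (P *m y) by rewrite vdot_mull PT.
have cross_term : vdot (P *m x) (E *m C^T *m v) = vdot v (C *m x).
  by rewrite [LHS]vdotC -mulmxA vdot_mull ET EPy vdot_mull trmxK.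
have S_sym : vdot v (S^T *m v) = vdot v (S *m v) by rewrite -vdot_mull vdotC.
have wx : vdot w x = \sum_a x a 0 ^+ 2 / H a a.
  by rewrite vdotE; apply: eq_bigr => a _; rewrite mxE mulrAC expr2.
rewrite !vdot_col_mx !mulmxDl -!scalemxAl !vdotDr !vdotZr -[C *m E *m _]mulmxA EPy.
rewrite !PxP cross_term S_sym wx; lra.
Qed.

Section GlobalState.
Variables (R : realType) (M : nat) (n : 'I_M -> nat).

Definition lyap (P : forall i, 'M[R]_(n i)) (X : gstate R n) : R :=
  \sum_i vdot (X i) (P i *m X i).

Lemma gnorm_ge0 (X : gstate R n) : 0 <= Defs.gnorm X.
Proof. by apply: sumr_ge0 => i _; apply: sumr_ge0. Qed.

Lemma gnorm_sqr_le (X : gstate R n) :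
  Defs.gnorm X ^+ 2 <= (\sum_i n i)%:R * \sum_i vdot (X i) (X i).
Proof.
have -> : Defs.gnorm X = \sum_r `|mxcol X r 0|.
  rewrite (@big_Rank _ _ _ _ n); apply: eq_bigr => i _.
  by apply: eq_bigr => a _; rewrite mxcol_Rank.
rewrite -vdot_mxcol vdotE -[X in X%:R](card_ord (\sum_i n i)).
under [X in _ <= _ * X]eq_bigr do rewrite -expr2.
exact: sqr_sum_norm_le.
Qed.

Lemma lyap_le_gnorm (P : forall i, 'M[R]_(n i)) (X : gstate R n) :
  lyap P X <= (\sum_i \sum_a \sum_b `|P i a b|) * Defs.gnorm X ^+ 2.
Proof.
rewrite /lyap mulr_suml; apply: ler_sum => i _; apply: le_trans (vdot_le_norm1 _ _) _.
apply: ler_wpM2l; first by apply: sumr_ge0 => a _; apply: sumr_ge0.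
rewrite ler_sqr ?nnegrE ?gnorm_ge0 ?sumr_ge0 //.
by apply: (ler_term_sum (F := fun i => \sum_a `|X i a 0|)) => j; apply: sumr_ge0.
Qed.

Lemma lyap_invmx_ge0 (E : forall i, 'M[R]_(n i)) (eps : 'I_M -> R) (X : gstate R n) :
  (forall i, 0 <= eps i) -> (forall i, (E i)^T = E i) -> (forall i, E i \in unitmx) ->
  (forall i, psd (E i - eps i *: 1%:M)) -> 0 <= lyap (fun i => invmx (E i)) X.
Proof.
move=> eps_ge0 E_sym E_unit E_psd; apply: sumr_ge0 => i _.
rewrite -{1}(mulKVmx (E_unit i) (X i)) vdot_mull E_sym.
apply: le_trans (psd_shift_vdot _ (E_psd i)).
by rewrite mulr_ge0 ?vdot_ge0.
Qed.

End GlobalState.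

Section ClosedLoop.
Variables (R : realType) (M m0 : nat) (n : 'I_M -> nat).
Variables (A : forall i, 'M[R]_(n i)) (B F : forall i, 'M[R]_(n i, m0)).
Variables (C : forall i, 'M[R]_(m0, n i)) (Nm : 'I_M -> {set 'I_M}) (l : 'I_M -> 'I_M -> R).
Variables (S : 'I_M -> 'M[R]_m0) (G : forall i, 'M[R]_(m0, n i)) (E H : forall i, 'M[R]_(n i)).
Variable eps0 : R.
Hypothesis Nm_irrefl : forall i, i \notin Nm i.
Hypothesis Ltilde_psd :
  forall w : 'cV[R]_(\sum_(i < M) m0), 0 <= (w^T *m Ltilde m0 Nm l *m w) 0 0.
Hypotheses (eps0_gt0 : 0 < eps0) (E_sym : forall i, (E i)^T = E i).
Hypothesis E_unit : forall i, E i \in unitmx.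
Hypothesis HS_posdiag : forall i, posdiag (H i) /\ posdiag (S i).
Hypothesis LMI_psd : forall i, psd (LMI (A i) (E i) (B i) (F i) (C i) (S i) (G i) (H i)).
Hypothesis H_le : forall i (j : 'I_(n i)), H i j j <= 1 / (rownorm1 (Wblk Nm l C i) j + eps0).
Hypothesis S_le : forall i (k : 'I_m0), 0 < rownorm1 (Ublk Nm l C i) k ->
  S i k k <= 1 / rownorm1 (Ublk Nm l C i) k.

Definition coupling_input (X : gstate R n) i : 'cV[R]_m0 :=
  \sum_(j in Nm i) l i j *: (C j *m X j - C i *m X i).

Lemma Cglob_mxcol (X : gstate R n) : Cglob C *m mxcol X = mxcol (fun i => C i *m X i).
Proof.
rewrite /Cglob mul_mxblock_mxrow; apply: eq_mxcol => i.
rewrite (bigD1 i) //= eqxx big1 ?addr0 // => j /negPf; rewrite eq_sym => ->.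
by rewrite mul0mx.
Qed.

Lemma Lcoef_sum (y : 'I_M -> 'cV[R]_m0) i :
  \sum_j Lcoef Nm l i j *: y j = - \sum_(j in Nm i) l i j *: (y j - y i).
Proof.
rewrite (bigD1 i) //= {1}/Lcoef eqxx scaler_suml.
rewrite [X in _ + X](eq_bigr (fun j => if j \in Nm i then - l i j *: y j else 0)); last first.
  by move=> j ji; rewrite /Lcoef eq_sym (negbTE ji); case: ifP; rewrite ?scale0r.
rewrite -big_mkcondr /= [X in _ + X](eq_bigl (mem (Nm i))); last first.
  by move=> j /=; rewrite andb_idl // => jN; apply: contraTneq jN => ->.
rewrite -sumrN -big_split /=; apply: eq_bigr => j _.
by rewrite scalerBr opprB scaleNr addrC.
Qed.

Lemma Ltilde_mxcol (y : 'I_M -> 'cV[R]_m0) :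
  Ltilde m0 Nm l *m mxcol y = mxcol (fun i => - \sum_(j in Nm i) l i j *: (y j - y i)).
Proof.
rewrite /Ltilde mul_mxblock_mxrow; apply: eq_mxcol => i.
by rewrite -Lcoef_sum; apply: eq_bigr => j _; rewrite mul_scalar_mx.
Qed.

Lemma Ublk_mxcol (X : gstate R n) i : Ublk Nm l C i *m mxcol X = - coupling_input X i.
Proof.
by rewrite /Ublk submxcol_mul /Uglob -mulmxA Cglob_mxcol Ltilde_mxcol mxcolK.
Qed.

Lemma Wglob_tr : Wglob Nm l C = (Uglob Nm l C)^T.
Proof. by rewrite /Wglob /Uglob trmx_mul. Qed.

Lemma coupling_output_le0 (X : gstate R n) :
  \sum_i vdot (coupling_input X i) (C i *m X i) <= 0.
Proof.
have := Ltilde_psd (Cglob C *m mxcol X); rewrite -mulmxA -/(vdot _ _).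
rewrite Cglob_mxcol Ltilde_mxcol vdot_mxcol -oppr_ge0 -sumrN.
by under eq_bigr do rewrite vdotNr vdotC.
Qed.

Lemma coupling_energy_le (X : gstate R n) :
  \sum_i vdot (coupling_input X i) (S i *m coupling_input X i)
    <= \sum_i \sum_a rownorm1 (Wblk Nm l C i) a * X i a 0 ^+ 2.
Proof.
set U := Uglob Nm l C; set y := mxcol X.
have row_bound i : vdot (coupling_input X i) (S i *m coupling_input X i)
    <= \sum_k \sum_c `|Ublk Nm l C i k c| * y c 0 ^+ 2.
  have [_ [S_diag S_gt0]] := HS_posdiag i.
  rewrite -[coupling_input X i]opprK -Ublk_mxcol mulmxN vdotNr.
  rewrite [vdot (- _) _]vdotC vdotNr opprK vdotC.
  apply: vdot_diag_le => // [k|k]; first exact: ltW.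
  have [rn_gt0|rn_le0] := ltrP 0 (rownorm1 (Ublk Nm l C i) k).
    by rewrite -ler_pdivlMr //; apply: S_le.
  have /eqP -> : rownorm1 (Ublk Nm l C i) k == 0.
    by rewrite eq_le rn_le0 sumr_ge0.
  by rewrite mulr0 ler01.
have reindex : \sum_i \sum_k \sum_c `|Ublk Nm l C i k c| * y c 0 ^+ 2
    = \sum_i \sum_a rownorm1 (Wblk Nm l C i) a * X i a 0 ^+ 2.
  transitivity (\sum_r \sum_c `|U r c| * y c 0 ^+ 2).
    rewrite [RHS](@big_Rank _ _ _ _ (fun=> m0)); apply: eq_bigr => i _.
    by apply: eq_bigr => k _; apply: eq_bigr => c _; rewrite mxE.
  rewrite exchange_big (@big_Rank _ _ _ _ n) /=; apply: eq_bigr => j _; apply: eq_bigr => a _.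
  rewrite mxcol_Rank /rownorm1 mulr_suml; apply: eq_bigr => r _.
  by rewrite /Wblk Wglob_tr !mxE.
by rewrite -reindex; apply: ler_sum => i _; apply: row_bound.
Qed.

Lemma lyap_cl_step_le (X : gstate R n) :
  lyap (fun i => invmx (E i)) (cl_step A B F C (fun i => G i *m invmx (E i)) Nm l X)
    <= lyap (fun i => invmx (E i)) X - eps0 * \sum_i vdot (X i) (X i).
Proof.
set K := fun i => G i *m invmx (E i); set Xp := cl_step A B F C K Nm l X.
set W := fun i (a : 'I_(n i)) => rownorm1 (Wblk Nm l C i) a.
have local i : vdot (Xp i) (invmx (E i) *m Xp i)
      + (\sum_a W i a * X i a 0 ^+ 2 + eps0 * vdot (X i) (X i))
    <= vdot (X i) (invmx (E i) *m X i) + vdot (coupling_input X i) (C i *m X i)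
       + vdot (coupling_input X i) (S i *m coupling_input X i).
  have [[_ H_gt0] _] := HS_posdiag i.
  apply: le_trans _ (LMI_local_decrease (E_sym i) (mulmxV (E_unit i)) (HS_posdiag i).1
    (LMI_psd i) erefl).
  by rewrite lerD2l; apply: sum_sqr_div_ge => // a; apply: sumr_ge0.
have := @ler_sum _ _ (index_enum 'I_M) xpredT _ _ (fun i _ => local i).
rewrite !big_split /= -mulr_sumr.
have := coupling_output_le0 X; have := coupling_energy_le X; rewrite /lyap; lra.
Qed.

End ClosedLoop.

Theorem theorem1 (R : realType) (M m0 : nat) (n : 'I_M -> nat)
  (A : forall i, 'M[R]_(n i)) (B F : forall i, 'M[R]_(n i, m0))
  (C : forall i, 'M[R]_(m0, n i))
  (Nm : 'I_M -> {set 'I_M}) (l : 'I_M -> 'I_M -> R)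
  (eps0 : R) (eps : 'I_M -> R)
  (S : 'I_M -> 'M[R]_m0) (G : forall i, 'M[R]_(m0, n i))
  (E H : forall i, 'M[R]_(n i)) :
  (0 < M)%N -> (0 < m0)%N ->
  (forall i, i \notin Nm i) ->
  (forall w : 'cV[R]_(\sum_(i < M) m0), 0 <= (w^T *m Ltilde m0 Nm l *m w) 0 0) ->
  0 < eps0 -> (forall i, 0 < eps i) ->
  (forall i, (E i)^T = E i) ->
  (forall i, psd (E i - eps i *: 1%:M)) ->
  (forall i, posdiag (H i) /\ posdiag (S i)) ->
  (forall i, psd (LMI (A i) (E i) (B i) (F i) (C i) (S i) (G i) (H i))) ->
  (forall i (j : 'I_(n i)),
     H i j j <= 1 / (rownorm1 (Wblk Nm l C i) j + eps0)) ->
  (forall i (k : 'I_m0), 0 < rownorm1 (Ublk Nm l C i) k ->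
     S i k k <= 1 / rownorm1 (Ublk Nm l C i) k) ->
  asympt_stable
    (cl_step A B F C (fun i => G i *m invmx (E i)) Nm l).
Proof.
move=> _ _ Nm_irrefl L_psd eps0_gt0 eps_gt0 E_sym E_psd HS_posdiag LMI_psd H_le S_le.
have E_unit i : E i \in unitmx := psd_shift_unitmx (eps_gt0 i) (E_psd i).
set f := cl_step _ _ _ _ _ _ _; set P := fun i => invmx (E i).
(* the [+ 1] keeps [a] positive when every n_i is 0 *)
set a := eps0 / ((\sum_i n i)%:R + 1); set c := \sum_i \sum_a \sum_b `|P i a b|.
have a_gt0 : 0 < a by rewrite divr_gt0 // ltr_wpDl.
have c_ge0 : 0 <= c by do 3 (apply: sumr_ge0 => ? _).
have V_ge0 X : 0 <= lyap P X.
  by apply: lyap_invmx_ge0 E_sym E_unit E_psd => i; apply: ltW.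
have V_le X : lyap P X <= (a + c) * Defs.gnorm X ^+ 2.
  apply: le_trans (lyap_le_gnorm P X) _.
  by rewrite ler_wpM2r ?sqr_ge0 // lerDr ltW.
have V_decr X : lyap P (f X) <= lyap P X - a * Defs.gnorm X ^+ 2.
  apply: le_trans (lyap_cl_step_le Nm_irrefl L_psd eps0_gt0 E_sym E_unit HS_posdiag
    LMI_psd H_le S_le X) _.
  rewrite lerD2l lerN2 /a mulrAC -mulrA ler_pM2l // ler_pdivrMr ?ltr_wpDl //.
  have := gnorm_sqr_le X; have := vdot_ge0 (mxcol X); rewrite vdot_mxcol; lra.
have ac : a <= a + c by rewrite lerDl.
split; first exact: lyapunov_stable a_gt0 ac (@gnorm_ge0 R M n) V_ge0 V_le V_decr.
exists 1 => // x0 _ e.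
exact: (lyapunov_attractive a_gt0 ac (@gnorm_ge0 R M n) V_ge0 V_le V_decr x0).
Qed.
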